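(* Let $\kappa<\Gamma$ be infinite cardinals. Then the Banach space $X_0^{\kappa,\Gamma}=\{f\in\ell_\infty(\Gamma):\exists A\subseteq\Gamma,\ |A|=\kappa,\ f|_{\Gamma\setminus A}\equiv 0\}$ (with the sup norm) fails the ball fixed point property.
   Context: $\ell_\infty(\Gamma)$ is the Banach space of bounded functions $\Gamma\to\mathbb{R}$ with the sup norm, where the cardinal $\Gamma$ is identified with the set of ordinals below it. A real Banach space $X$ has the ball fixed point property (BFPP) if every nonexpansive map $T\colon B_X\to B_X$ (i.e. $\|Tx-Ty\|\le\|x-y\|$) has a fixed point, where $B_X$ is the closed unit ball. *)

From HB Require Import structures.
From mathcomp Require Import all_boot all_order all_algebra.
From mathcomp Require Import all_classical all_reals.
From mathcomp Require Import Rstruct.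
From Stdlib Require Import Rdefinitions.
Notation R := Rdefinitions.R.
Import Order.TTheory GRing.Theory Num.Theory.
Local Open Scope classical_set_scope.
Local Open Scope ring_scope.

(* Real-valued functions on an index type G (the cardinal Gamma, viewed as a
   type whose cardinality is Gamma), over Stdlib's reals R (a realType). *)

Definition bounded_fun {G : Type} (f : G -> R) : Prop :=
  exists M : R, forall g, `|f g| <= M.

Definition supnorm {G : Type} (f : G -> R) : R :=
  sup [set `|f g| | g in [set: G]].

Definition X0 (K G : Type) : set (G -> R) :=
  [set f | bounded_fun f /\
           exists A : set G, (A #= [set: K])%card /\ forall g, ~ A g -> f g = 0].

Definition unit_ball {G : Type} (X : set (G -> R)) : set (G -> R) :=
  [set f | X f /\ supnorm f <= 1].

(* Maps B_X -> B_X are represented by functions on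
   G -> R whose values on B_X lie in B_X (values off B_X are irrelevant). *)
Definition BFPP {G : Type} (X : set (G -> R)) : Prop :=
  forall T : (G -> R) -> (G -> R),
    (forall f, unit_ball X f -> unit_ball X (T f)) ->
    (forall f h, unit_ball X f -> unit_ball X h ->
       supnorm (fun g => T f g - T h g) <= supnorm (fun g => f g - h g)) ->
    exists f, unit_ball X f /\ T f = f.

From HB Require Import structures.
From mathcomp Require Import all_boot all_order all_algebra.
From mathcomp Require Import all_classical all_reals.
From mathcomp Require Import Rstruct.
From mathcomp Require Import lra wochoice.
Set Implicit Arguments.
Unset Strict Implicit.
Unset Printing Implicit Defensive.
Import Order.TTheory GRing.Theory Num.Theory.
Local Open Scope classical_set_scope.
Local Open Scope ring_scope.

(* Well-order Gamma and send f to (T f)(a) = min(1, inf_{b < a} |f b|).  T is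
   nonexpansive, and it preserves the ball of X_0: if b0 is the least point
   outside the support A of f (it exists because |A| = kappa < Gamma), then
   T f vanishes beyond b0, so it is supported by A + {b0}, still of size kappa.
   A fixed point f = T f is 1 everywhere by well-founded induction, which is
   impossible for a function supported by a set of size kappa < Gamma. *)

Section InfBefore.
Variables (G : Type) (lt : G -> G -> Prop).

Definition capped_values_before (f : G -> R) (a : G) : set R :=
  [set 1] `|` [set `|f b| | b in [set b | lt b a]].

Definition inf_before (f : G -> R) (a : G) : R :=
  inf (capped_values_before f a).

Lemma capped_values_before_lb0 f a : lbound (capped_values_before f a) 0.
Proof. by move=> y [->//|[b _ <-]]. Qed.

Lemma inf_before_ge0 f a : 0 <= inf_before f a.
Proof. by apply: lb_le_inf; [exists 1; left|exact: capped_values_before_lb0]. Qed.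

Lemma inf_before_le1 f a : inf_before f a <= 1.
Proof.
by apply: ge_inf; [exists 0; exact: capped_values_before_lb0|left].
Qed.

Lemma inf_before_le f {a b} : lt b a -> inf_before f a <= `|f b|.
Proof.
move=> ba; apply: ge_inf; first by exists 0; exact: capped_values_before_lb0.
by right; exists b.
Qed.

Lemma inf_before_eq0 f {a} b : lt b a -> f b = 0 -> inf_before f a = 0.
Proof.
move=> ba fb0; apply/le_anti; rewrite inf_before_ge0 andbT.
by rewrite -(normr0 R) -fb0 inf_before_le.
Qed.

Lemma inf_before_lipschitz f h a d : (forall b, `|f b - h b| <= d) ->
  inf_before f a <= inf_before h a + d.
Proof.
move=> fh; have d0 : 0 <= d by apply: le_trans (fh a).
rewrite -lerBlDr; apply: lb_le_inf; first by exists 1; left.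
move=> y [->|[b /= ba <-]]; rewrite lerBlDr.
  by apply: le_trans (inf_before_le1 f a) _; rewrite lerDl.
apply: le_trans (inf_before_le f ba) _.
by rewrite -[f b](subrK (h b)) addrC (le_trans (ler_normD _ _)) ?lerD2l.
Qed.

Hypothesis lt_wf : forall P : set G, P !=set0 ->
  exists z, P z /\ forall b, P b -> ~ lt b z.

Lemma inf_before_fixed_eq1 f : (forall a, f a = inf_before f a) ->
  forall a, f a = 1.
Proof.
move=> ffix; apply: contrapT => /existsNP ne1.
have [z [fz1 zmin]] := lt_wf ne1; apply: fz1.
apply/le_anti; rewrite ffix inf_before_le1 /=.
apply: lb_le_inf; first by exists 1; left.
move=> y [->//|[b bz <-]].
have -> : f b = 1 by apply: contrapT => fb1; exact: zmin b fb1 bz.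
by rewrite normr1.
Qed.

End InfBefore.

Section SupNorm.
Variable G : Type.

Lemma bounded_funB (f h : G -> R) :
  bounded_fun f -> bounded_fun h -> bounded_fun (fun g => f g - h g).
Proof.
move=> [Mf fM] [Mh hM]; exists (Mf + Mh) => g.
exact: le_trans (ler_normB _ _) (lerD (fM g) (hM g)).
Qed.

Lemma ler_supnorm (f : G -> R) : bounded_fun f -> forall g, `|f g| <= supnorm f.
Proof.
by move=> [M fM] g; apply: ub_le_sup; [exists M => _ [b _ <-]|exists g].
Qed.

Lemma supnorm_le (g0 : G) (f : G -> R) c :
  (forall g, `|f g| <= c) -> supnorm f <= c.
Proof. by move=> fc; apply: ge_sup; [exists `|f g0|; exists g0|move=> _ [g _ <-]]. Qed.

Lemma inf_before_nonexpansive (g0 : G) lt (f h : G -> R) :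
  bounded_fun f -> bounded_fun h ->
  supnorm (fun g => inf_before lt f g - inf_before lt h g)
    <= supnorm (fun g => f g - h g).
Proof.
move=> fb hb; set d := supnorm (fun g => f g - h g).
have fhd b : `|f b - h b| <= d by exact: ler_supnorm (bounded_funB fb hb) b.
have hfd b : `|h b - f b| <= d by rewrite distrC.
apply: (supnorm_le g0) => g; rewrite ler_norml.
have := inf_before_lipschitz lt g fhd; have := inf_before_lipschitz lt g hfd.
by move=> hf fh; apply/andP; split; lra.
Qed.

End SupNorm.

Lemma card_setU1_infinite (T : pointedType) (A : set T) (x : T) :
  infinite_set A -> (A `|` [set x] #= A)%card.
Proof.
move=> iA; rewrite card_eq_le (subset_card_le (@subsetUl _ A [set x])) andbT.
have [Ax|nAx] := pselect (A x); first by apply: subset_card_le => y [//|->].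
have /pcard_leP[e] := proj1 (infiniteP A) iA.
have eA n : A (e n) by apply: funS.
have einj m n : e m = e n -> m = n by move=> /(inj (in_setT m) (in_setT n)).
(* Hilbert's hotel: shift the sequence e down by one and put x in front. *)
pose f y := match pselect (exists n, y = e n) with
  | left P => match projT1 (cid P) with 0%N => x | n.+1 => e n end
  | right _ => y end.
have fe n : f (e n) = match n with 0%N => x | k.+1 => e k end.
  rewrite /f; case: pselect => [P|]; last by case; exists n.
  by case: (cid P) => m /= /einj ->.
suff -> : A `|` [set x] = f @` A by exact: card_image_le.
apply/seteqP; split => y.
  case=> [Ay|->]; last by exists (e 0%N) => //; rewrite fe.
  have [[n ->]|nE] := pselect (exists n, y = e n).
    by exists (e n.+1) => //; rewrite fe.
  by exists y => //; rewrite /f; case: pselect.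
case=> z Az <-; rewrite /f; case: pselect => [P|_]; last by left.
by case: (cid P) => -[|n] /= _; [right|left].
Qed.

Lemma card_lt_setC_neq0 (K G : Type) (A : set G) :
  ~ ([set: G] #<= [set: K])%card -> (A #= [set: K])%card -> ~` A !=set0.
Proof.
move=> GK AK; apply/setTPn/eqP => AT; apply: GK.
by rewrite -AT; move: AK; rewrite card_eq_le => /andP[].
Qed.

Section WellOrder.
Variables (G : eqType) (r : rel G).
Hypothesis r_wo : well_order r.

Definition strict_before (b a : G) : Prop := r b a /\ b <> a.

Lemma well_order_minimum (P : set G) : P !=set0 ->
  exists z, P z /\ forall x, P x -> r z x.
Proof.
move=> [x Px]; have [|z [[zP zlb] _]] := r_wo (A := [pred y | `[< P y >]]).
  by rewrite /nonempty; exists x; rewrite inE.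
exists z; split; first by move: zP; rewrite inE.
by move=> y Py; apply: zlb; rewrite inE.
Qed.

Lemma strict_before_wf (P : set G) : P !=set0 ->
  exists z, P z /\ forall b, P b -> ~ strict_before b z.
Proof.
move=> /well_order_minimum[z [Pz zmin]]; exists z; split=> // b Pb [bz nbz].
apply/nbz/(wo_chain_antisymmetric (@withinW _ predT _ r_wo)) => //.
by rewrite bz zmin.
Qed.

End WellOrder.

Lemma unit_ball_X0_inf_before (K : Type) (G : pointedType) (r : rel G) :
  well_order r -> infinite_set [set: K] -> ~ ([set: G] #<= [set: K])%card ->
  forall f, unit_ball (X0 K G) f ->
  unit_ball (X0 K G) (inf_before (strict_before r) f).
Proof.
move=> r_wo iK GK f [[_ [A [AK Af]]] _].
have inf_before_01 g : `|inf_before (strict_before r) f g| <= 1.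
  by rewrite ger0_norm ?inf_before_ge0 ?inf_before_le1.
split; last exact: (supnorm_le point).
split; first by exists 1.
have [b0 [nAb0 b0min]] := well_order_minimum r_wo (card_lt_setC_neq0 GK AK).
exists (A `|` [set b0]); split.
  apply: (card_eq_trans _ AK); apply: card_setU1_infinite.
  by rewrite (eq_finite_set AK).
move=> g /not_orP[nAg gb0]; apply: (inf_before_eq0 (b := b0)); last exact: Af.
by split; [exact: b0min|move=> b0g; apply: gb0].
Qed.

Theorem mainTheorem9 (K G : Type) :
  infinite_set [set: K] ->
  ([set: K] #<= [set: G])%card ->
  ~ ([set: G] #<= [set: K])%card ->
  ~ BFPP (X0 K G).
Proof.
elim/Ppointed: G => G iK _ GK; first by move=> _; apply: GK; exact: card_le_emptyl.
have [r r_wo] := well_ordering_principle G.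
pose T := inf_before (strict_before r).
have T_ball : forall f, unit_ball (X0 K G) f -> unit_ball (X0 K G) (T f).
  exact: unit_ball_X0_inf_before.
have T_nonexp f h : unit_ball (X0 K G) f -> unit_ball (X0 K G) h ->
    supnorm (fun g => T f g - T h g) <= supnorm (fun g => f g - h g).
  by move=> [[fb _] _] [[hb _] _]; exact: (inf_before_nonexpansive point).
move=> /(_ T T_ball T_nonexp) [f [[[_ [A [AK Af]]] _] Tf]].
have f1 : forall g, f g = 1.
  by apply: (inf_before_fixed_eq1 (strict_before_wf r_wo)) => g; rewrite -[in LHS]Tf.
have [g nAg] := card_lt_setC_neq0 GK AK.
by have := f1 g; rewrite Af // => /eqP; rewrite eq_sym oner_eq0.
Qed.
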